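(* Let $\mathfrak{CD}^3_{03}$ be the complex algebra with basis $e_1,e_2,e_3$ and nonzero products $e_1e_1=e_2$, $e_2e_1=e_3$. Let $\mathbf B$ be a complex $4$-dimensional algebra such that $\dim\operatorname{Ann}(\mathbf B)=1$, $\mathbf B/\operatorname{Ann}(\mathbf B)\cong\mathfrak{CD}^3_{03}$, and $\mathbf B$ is not a $\mathfrak{CD}$-algebra. Then $\mathbf B$ is isomorphic to one of the following algebras with basis $e_1,\dots,e_4$ (unlisted products of basis vectors are zero; Greek letters are arbitrary complex parameters unless restricted): $\mathbf N_{26}(\alpha)$: $e_1e_1=e_2,\ e_1e_2=e_4,\ e_1e_3=-\alpha e_4,\ e_2e_1=e_3,\ e_2e_2=\alpha e_4,\ e_3e_1=(1+2\alpha)e_4$; $\mathbf N_{27}(\alpha,\beta)$: $e_1e_1=e_2,\ e_1e_2=\alpha e_4,\ e_2e_1=e_3,\ e_2e_2=\beta e_4,\ e_2e_3=e_4,\ e_3e_1=e_4$; $\mathbf N_{28}(\alpha,\beta,\gamma)$: $e_1e_1=e_2,\ e_1e_2=\alpha e_4,\ e_2e_1=e_3,\ e_2e_2=\beta e_4,\ e_2e_3=e_4,\ e_3e_1=\gamma e_4,\ e_3e_3=e_4$; $\mathbf N_{29}(\alpha,\beta)$: $e_1e_1=e_2,\ e_1e_2=\alpha e_4,\ e_2e_1=e_3,\ e_2e_2=\beta e_4,\ e_3e_1=e_4,\ e_3e_3=e_4$; $\mathbf N_{30}(\alpha)$: $e_1e_1=e_2,\ e_1e_2=\alpha e_4,\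 e_2e_1=e_3,\ e_2e_2=e_4,\ e_2e_3=e_4$; $\mathbf N_{31}(\alpha)$: $e_1e_1=e_2,\ e_1e_2=\alpha e_4,\ e_2e_1=e_3,\ e_2e_2=e_4,\ e_3e_3=e_4$; $\mathbf N_{32}$: $e_1e_1=e_2,\ e_1e_2=e_4,\ e_2e_1=e_3,\ e_2e_3=e_4$; $\mathbf N_{33}$: $e_1e_1=e_2,\ e_1e_2=e_4,\ e_2e_1=e_3,\ e_3e_3=e_4$; $\mathbf N_{34}(\alpha,\beta)$: $e_1e_1=e_2,\ e_1e_3=\beta e_4,\ e_2e_1=e_3,\ e_2e_2=\alpha e_4,\ e_3e_1=(1-2\beta)e_4$; $\mathbf N_{35}(\alpha)$: $e_1e_1=e_2,\ e_1e_3=\alpha e_4,\ e_2e_1=e_3,\ e_2e_2=e_4,\ e_3e_1=-2\alpha e_4,\ e_3e_2=e_4$; $\mathbf N_{36}(\alpha,\beta)$ with $\beta\neq0$: $e_1e_1=e_2,\ e_2e_1=e_3,\ e_2e_2=\alpha e_4,\ e_2e_3=\beta e_4,\ e_3e_1=e_4,\ e_3e_2=e_4$; $\mathbf N_{37}(\alpha)$ with $\alpha\ne0$: $e_1e_1=e_2,\ e_2e_1=e_3,\ e_2e_2=e_4,\ e_2e_3=\alpha e_4,\ e_3e_2=e_4$; $\mathbf N_{38}$: $e_1e_1=e_2,\ e_1e_3=e_4,\ e_2e_1=e_3,\ e_3e_1=-2e_4,\ e_3e_2=e_4$; $\mathbf N_{39}$: $e_1e_1=e_2,\ e_2e_1=e_3,\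 e_2e_3=e_4$; $\mathbf N_{40}(\alpha)$: $e_1e_1=e_2,\ e_2e_1=e_3,\ e_2e_3=\alpha e_4,\ e_3e_2=e_4$; $\mathbf N_{41}$: $e_1e_1=e_2,\ e_2e_1=e_3,\ e_3e_3=e_4$. All algebras in this list (for all admissible parameter values) are pairwise non-isomorphic, except that $\mathbf N_{29}(\alpha,\beta)\cong\mathbf N_{29}(-\alpha,\beta)$ and $\mathbf N_{31}(\alpha)\cong\mathbf N_{31}(-\alpha)$.
   Context: All algebras are complex vector spaces with a bilinear multiplication, with no identities assumed. The annihilator of an algebra $\mathbf A$ is $\operatorname{Ann}(\mathbf A)=\{x\in\mathbf A: x\mathbf A=\mathbf Ax=0\}$. An algebra $\mathbf A$ is a $\mathfrak{CD}$-algebra if for all $x,y,a,b\in\mathbf A$: $((xy)a)b-((xy)b)a=((xa)b-(xb)a)y+x((ya)b-(yb)a)$, $(a(xy))b-a((xy)b)=((ax)b-a(xb))y+x((ay)b-a(yb))$, $a(b(xy))-b(a(xy))=(a(bx)-b(ax))y+x(a(by)-b(ay))$ (equivalently, every commutator $[T_x,T_y]$ of operators $T_x,T_y$, each a left or right multiplication operator, is a derivation). *)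

From mathcomp Require Import all_boot all_order all_algebra.
From mathcomp Require Import complex Rstruct.
Set Implicit Arguments. Unset Strict Implicit. Unset Printing Implicit Defensive.
Import GRing.Theory.
Local Open Scope ring_scope.

Definition C : numClosedFieldType := complex.complex Rdefinitions.R.

(* An n-dimensional (not necessarily associative, no unit) complex algebra is
   given by its structure constants in a basis: T i j = e_i e_j, a row vector
   of coordinates. *)
Definition sconst (n : nat) := 'I_n -> 'I_n -> 'rV[C]_n.

Definition amul (n : nat) (T : sconst n) (x y : 'rV[C]_n) : 'rV[C]_n :=
  \sum_(i < n) \sum_(j < n) (x 0 i * y 0 j) *: T i j.

Definition in_ann (n : nat) (T : sconst n) (x : 'rV[C]_n) : Prop :=
  forall y, amul T x y = 0 /\ amul T y x = 0.

Definition ann_dim1 (n : nat) (T : sconst n) : Prop :=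
  exists a : 'rV[C]_n, a != 0 /\ forall x, in_ann T x <-> exists k : C, x = k *: a.

Definition is_CD (n : nat) (T : sconst n) : Prop :=
  let m := amul T in
  forall x y a b : 'rV[C]_n,
    m (m (m x y) a) b - m (m (m x y) b) a
      = m (m (m x a) b - m (m x b) a) y + m x (m (m y a) b - m (m y b) a)
 /\ m (m a (m x y)) b - m a (m (m x y) b)
      = m (m (m a x) b - m a (m x b)) y + m x (m (m a y) b - m a (m y b))
 /\ m a (m b (m x y)) - m b (m a (m x y))
      = m (m a (m b x) - m b (m a x)) y + m x (m a (m b y) - m b (m a y)).

Definition alg_iso (n : nat) (T1 T2 : sconst n) : Prop :=
  exists P : 'M[C]_n, P \in unitmx /\
    forall x y, amul T1 x y *m P = amul T2 (x *m P) (y *m P).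

(* A / Ann(A) is isomorphic to the m-dimensional algebra S: there is a
   surjective algebra homomorphism A -> S whose kernel is exactly Ann(A)
   (first isomorphism theorem). *)
Definition quot_ann_iso (n m : nat) (T : sconst n) (S : sconst m) : Prop :=
  exists f : 'M[C]_(n, m), row_full f /\
    (forall x y, amul T x y *m f = amul S (x *m f) (y *m f)) /\
    (forall x, in_ann T x <-> x *m f = 0).

(* 1-based basis vectors e_1, ..., e_n *)
Definition bvec (n : nat) (k : nat) : 'rV[C]_n.+1 := delta_mx 0 (inord k.-1).

Definition CD3_03 : sconst 3 := fun i j =>
  match (i : nat).+1, (j : nat).+1 with
  | 1, 1 => bvec 2 2
  | 2, 1 => bvec 2 3
  | _, _ => 0
  end.

Inductive Nlab : Type :=
  | N26 of C | N27 of C & C | N28 of C & C & C | N29 of C & C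
  | N30 of C | N31 of C | N32 | N33 | N34 of C & C | N35 of C
  | N36 of C & C | N37 of C | N38 | N39 | N40 of C | N41.

Definition Nadm (l : Nlab) : Prop :=
  match l with
  | N36 _ b => b != 0
  | N37 a => a != 0
  | _ => True
  end.

(* coefficient of e4 in e_i e_j (1-based indices) *)
Definition Ncoef (l : Nlab) (i j : nat) : C :=
  match l, i, j with
  | N26 a, 1, 2 => 1 | N26 a, 1, 3 => - a | N26 a, 2, 2 => a
  | N26 a, 3, 1 => 1 + 2 * a
  | N27 a b, 1, 2 => a | N27 a b, 2, 2 => b | N27 a b, 2, 3 => 1
  | N27 a b, 3, 1 => 1
  | N28 a b c, 1, 2 => a | N28 a b c, 2, 2 => b | N28 a b c, 2, 3 => 1
  | N28 a b c, 3, 1 => c | N28 a b c, 3, 3 => 1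
  | N29 a b, 1, 2 => a | N29 a b, 2, 2 => b | N29 a b, 3, 1 => 1
  | N29 a b, 3, 3 => 1
  | N30 a, 1, 2 => a | N30 a, 2, 2 => 1 | N30 a, 2, 3 => 1
  | N31 a, 1, 2 => a | N31 a, 2, 2 => 1 | N31 a, 3, 3 => 1
  | N32, 1, 2 => 1 | N32, 2, 3 => 1
  | N33, 1, 2 => 1 | N33, 3, 3 => 1
  | N34 a b, 1, 3 => b | N34 a b, 2, 2 => a | N34 a b, 3, 1 => 1 - 2 * b
  | N35 a, 1, 3 => a | N35 a, 2, 2 => 1 | N35 a, 3, 1 => - (2 * a)
  | N35 a, 3, 2 => 1
  | N36 a b, 2, 2 => a | N36 a b, 2, 3 => b | N36 a b, 3, 1 => 1
  | N36 a b, 3, 2 => 1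
  | N37 a, 2, 2 => 1 | N37 a, 2, 3 => a | N37 a, 3, 2 => 1
  | N38, 1, 3 => 1 | N38, 3, 1 => - 2 | N38, 3, 2 => 1
  | N39, 2, 3 => 1
  | N40 a, 2, 3 => a | N40 a, 3, 2 => 1
  | N41, 3, 3 => 1
  | _, _, _ => 0
  end.

Definition Nalg (l : Nlab) : sconst 4 := fun i j =>
  let i' := (i : nat).+1 in let j' := (j : nat).+1 in
  (if (i' == 1%N) && (j' == 1%N) then bvec 3 2 else 0)
  + (if (i' == 2%N) && (j' == 1%N) then bvec 3 3 else 0)
  + Ncoef l i' j' *: bvec 3 4.

From mathcomp Require Import all_boot all_order all_algebra.
From mathcomp Require Import ring.
From Stdlib Require Import FunctionalExtensionality.
Import GRing.Theory Num.Theory.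
Local Open Scope ring_scope.

(* Lifting e1 of CD^3_03 to B and completing by e2 = e1 e1,
      e3 = e2 e1 and a generator e4 of Ann(B) gives a basis in which B is
      Ext th: the product of CD^3_03 plus a bilinear form th (a cocycle)
      times e4 (reduce_to_Ext).  If th satisfies four linear conditions,
      Ext th is a CD-algebra (Ext_is_CD); so B non-CD excludes them.
   2. Existence.  The automorphisms of CD^3_03, lifted to Ext th, act on
      cocycles by act a b c lam (Ext_act_iso).  Splitting by the first
      nonzero entry among th33, th32, th23 and normalising with suitable
      a, b, c, lam brings th to one of the N_l (classify).
   3. Uniqueness.  Every isomorphism Ext th -> Ext u has this triangular
      shape (Ext_iso_orbit), which yields polynomial "orbit equations"; the
      leading entry is an invariant (Ngroup_orbit) and, group by group, the
      orbit equations force l = l' up to the sign changes of N29 and N31,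
      which are realised by e1 |-> -e1 (N_iso_sound, N_iso_complete). *)

Section AlgebraBasics.
Variable n : nat.
Implicit Types (T S : sconst n) (x y : 'rV[C]_n).

Lemma amulE T x y k :
  (amul T x y) 0 k = \sum_i \sum_j x 0 i * y 0 j * (T i j) 0 k.
Proof.
rewrite /amul summxE; apply: eq_bigr => i _; rewrite summxE.
by apply: eq_bigr => j _; rewrite mxE.
Qed.

Lemma amulDl T x1 x2 y : amul T (x1 + x2) y = amul T x1 y + amul T x2 y.
Proof.
rewrite /amul -big_split; apply: eq_bigr => i _; rewrite -big_split.
by apply: eq_bigr => j _; rewrite mxE mulrDl scalerDl.
Qed.

Lemma amulDr T x y1 y2 : amul T x (y1 + y2) = amul T x y1 + amul T x y2.
Proof.
rewrite /amul -big_split; apply: eq_bigr => i _; rewrite -big_split.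
by apply: eq_bigr => j _; rewrite mxE mulrDr scalerDl.
Qed.

Lemma amulZl T c x y : amul T (c *: x) y = c *: amul T x y.
Proof.
rewrite /amul scaler_sumr; apply: eq_bigr => i _; rewrite scaler_sumr.
by apply: eq_bigr => j _; rewrite mxE scalerA mulrA.
Qed.

Lemma amulZr T c x y : amul T x (c *: y) = c *: amul T x y.
Proof.
rewrite /amul scaler_sumr; apply: eq_bigr => i _; rewrite scaler_sumr.
by apply: eq_bigr => j _; rewrite mxE scalerA mulrCA.
Qed.

Lemma amul0l T y : amul T 0 y = 0.
Proof. by rewrite /amul big1 // => i _; rewrite big1 // => j _; rewrite mxE mul0r scale0r. Qed.

Lemma amul0r T x : amul T x 0 = 0.
Proof. by rewrite /amul big1 // => i _; rewrite big1 // => j _; rewrite mxE mulr0 scale0r. Qed.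

Lemma amul_rows T (Q : 'M[C]_n) x y :
  amul T (x *m Q) (y *m Q) = \sum_i \sum_j (x 0 i * y 0 j) *: amul T (row i Q) (row j Q).
Proof.
rewrite [x *m Q]mulmx_sum_row.
rewrite (big_morph (fun u => amul T u (y *m Q)) (fun u v => amulDl T u v _) (amul0l T _)).
apply: eq_bigr => i _; rewrite amulZl [y *m Q]mulmx_sum_row.
rewrite (big_morph (amul T (row i Q)) (amulDr T _) (amul0r T _)) scaler_sumr.
by apply: eq_bigr => j _; rewrite amulZr scalerA.
Qed.

Lemma amul_hom_rows T S (Q : 'M[C]_n) :
  (forall i j, S i j *m Q = amul T (row i Q) (row j Q)) ->
  forall x y, amul S x y *m Q = amul T (x *m Q) (y *m Q).
Proof.
move=> KQ x y; rewrite amul_rows /amul mulmx_suml; apply: eq_bigr => i _.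
by rewrite mulmx_suml; apply: eq_bigr => j _; rewrite -scalemxAl KQ.
Qed.

Lemma alg_iso_refl T : alg_iso T T.
Proof. by exists 1%:M; split; [exact: unitmx1 | move=> x y; rewrite !mulmx1]. Qed.

Lemma alg_iso_sym T S : alg_iso T S -> alg_iso S T.
Proof.
case=> P [Pu H]; exists (invmx P); split; first by rewrite unitmx_inv.
move=> x y; have := H (x *m invmx P) (y *m invmx P).
by rewrite !mulmxKV // => <-; rewrite mulmxK.
Qed.

Lemma alg_iso_trans T1 T2 T3 : alg_iso T1 T2 -> alg_iso T2 T3 -> alg_iso T1 T3.
Proof.
case=> P [Pu H] [Q [Qu K]]; exists (P *m Q); split; first by rewrite unitmx_mul Pu.
by move=> x y; rewrite mulmxA H K !mulmxA.
Qed.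

Lemma is_CD_iso T S : alg_iso T S -> is_CD S -> is_CD T.
Proof.
case=> P [Pu H] cdS; rewrite /is_CD => x y a b.
have Pinj : injective (mulmx^~ P : 'rV[C]_n -> 'rV[C]_n).
  by move=> u v /(congr1 (mulmx^~ (invmx P))); rewrite !mulmxK.
have [c1 [c2 c3]] := cdS (x *m P) (y *m P) (a *m P) (b *m P).
split; [|split]; apply: Pinj; do 4 rewrite ?mulmxBl ?mulmxDl ?H.
- exact: c1.
- exact: c2.
- exact: c3.
Qed.

Lemma unitmx_ker0 (A : 'M[C]_n) : (forall v : 'rV[C]_n, v *m A = 0 -> v = 0) ->
  A \in unitmx.
Proof.
move=> H; rewrite -row_free_unit -kermx_eq0; apply/eqP/row_matrixP => i.
by rewrite row0; apply: H; rewrite -row_mul mulmx_ker row0.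
Qed.

Lemma unitmx_col_neq0 (P : 'M[C]_n) j : P \in unitmx -> ~ (forall k, P k j = 0).
Proof.
move=> Pu H; have := congr1 (fun M : 'M[C]_n => M j j) (mulVmx Pu).
rewrite [in RHS]mxE eqxx mxE big1 => [/eqP|k _]; first by rewrite eq_sym oner_eq0.
by rewrite H mulr0.
Qed.

Lemma unitmx_row_neq0 (P : 'M[C]_n) i : P \in unitmx -> ~ (forall k, P i k = 0).
Proof.
move=> Pu H; have := congr1 (fun M : 'M[C]_n => M i i) (mulmxV Pu).
rewrite [in RHS]mxE eqxx mxE big1 => [/eqP|k _]; first by rewrite eq_sym oner_eq0.
by rewrite H mul0r.
Qed.

End AlgebraBasics.

(* An identity A = B is derived from hypotheses
   L_k = R_k by exhibiting A - B as a combination of the L_k - R_k (the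
   combination being checked by ring); nonzero factors are cancelled. *)
Lemma lin_comb1 (c1 L1 R1 A B : C) : L1 = R1 -> A - B = c1 * (L1 - R1) -> A = B.
Proof. by move=> -> h; apply/eqP; rewrite -subr_eq0 h subrr mulr0. Qed.

Lemma lin_comb2 (c1 c2 L1 R1 L2 R2 A B : C) : L1 = R1 -> L2 = R2 ->
  A - B = c1 * (L1 - R1) + c2 * (L2 - R2) -> A = B.
Proof. by move=> -> -> h; apply/eqP; rewrite -subr_eq0 h !subrr !mulr0 addr0. Qed.

Lemma lin_comb3 (c1 c2 c3 L1 R1 L2 R2 L3 R3 A B : C) : L1 = R1 -> L2 = R2 -> L3 = R3 ->
  A - B = c1 * (L1 - R1) + c2 * (L2 - R2) + c3 * (L3 - R3) -> A = B.
Proof. by move=> -> -> -> h; apply/eqP; rewrite -subr_eq0 h !subrr !mulr0 !addr0. Qed.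

Arguments lin_comb1 c1 {L1 R1 A B}.
Arguments lin_comb2 c1 c2 {L1 R1 L2 R2 A B}.
Arguments lin_comb3 c1 c2 c3 {L1 R1 L2 R2 L3 R3 A B}.

Lemma mulf_cancel (k y : C) : y != 0 -> k * y = 0 -> k = 0.
Proof. by move=> y0 /eqP; rewrite mulf_eq0 (negbTE y0) orbF => /eqP. Qed.

Lemma expf_cancel (a X : C) n : a != 0 -> a ^+ n * X = 0 -> X = 0.
Proof. by move=> a0 /eqP; rewrite mulf_eq0 expf_eq0 (negbTE a0) andbF /= => /eqP. Qed.

Arguments mulf_cancel {k y}.
Arguments expf_cancel {a X n}.

Lemma root_neq0 (n : nat) {k : C} : k != 0 -> exists2 a : C, a != 0 & a ^+ n.+1 = k.
Proof.
move=> k0; exists (n.+1.-root k); last by rewrite rootCK.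
by apply: contra_neq k0 => r0; rewrite -(rootCK (ltn0Sn n) k) r0 expr0n.
Qed.

(* Coordinates.  o0, ..., o3 index the coordinates of C^4 (the basis vectors
   e1, ..., e4) and p0, p1, p2 those of C^3; r4 and r3 build vectors from
   their coordinates, so that all computations reduce to identities in C. *)

Definition o0 : 'I_4 := @Ordinal 4 0 isT.
Definition o1 : 'I_4 := @Ordinal 4 1 isT.
Definition o2 : 'I_4 := @Ordinal 4 2 isT.
Definition o3 : 'I_4 := @Ordinal 4 3 isT.

Definition p0 : 'I_3 := @Ordinal 3 0 isT.
Definition p1 : 'I_3 := @Ordinal 3 1 isT.
Definition p2 : 'I_3 := @Ordinal 3 2 isT.

Lemma ord4P (P : 'I_4 -> Prop) : P o0 -> P o1 -> P o2 -> P o3 -> forall k, P k.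
Proof.
move=> h0 h1 h2 h3 [[|[|[|[|k]]]] Hk] //.
- by have -> : Ordinal Hk = o0 by exact: val_inj.
- by have -> : Ordinal Hk = o1 by exact: val_inj.
- by have -> : Ordinal Hk = o2 by exact: val_inj.
- by have -> : Ordinal Hk = o3 by exact: val_inj.
Qed.

Lemma ord3P (P : 'I_3 -> Prop) : P p0 -> P p1 -> P p2 -> forall k, P k.
Proof.
move=> h0 h1 h2 [[|[|[|k]]] Hk] //.
- by have -> : Ordinal Hk = p0 by exact: val_inj.
- by have -> : Ordinal Hk = p1 by exact: val_inj.
- by have -> : Ordinal Hk = p2 by exact: val_inj.
Qed.

Lemma sum4 (V : nmodType) (F : 'I_4 -> V) : \sum_(i < 4) F i = F o0 + F o1 + F o2 + F o3.
Proof.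
rewrite !big_ord_recl big_ord0 addr0 !addrA.
by congr (F _ + F _ + F _ + F _); exact: val_inj.
Qed.

Lemma sum3 (V : nmodType) (F : 'I_3 -> V) : \sum_(i < 3) F i = F p0 + F p1 + F p2.
Proof.
rewrite !big_ord_recl big_ord0 addr0 !addrA.
by congr (F _ + F _ + F _); exact: val_inj.
Qed.

Lemma eqnb (a b : nat) : (a == b) = Nat.eqb a b.
Proof. by case: eqP; case: PeanoNat.Nat.eqb_spec. Qed.

Definition r4 (c0 c1 c2 c3 : C) : 'rV[C]_4 := \row_(k < 4) nth 0 [:: c0; c1; c2; c3] k.
Definition r3 (c0 c1 c2 : C) : 'rV[C]_3 := \row_(k < 3) nth 0 [:: c0; c1; c2] k.

Lemma r4E c0 c1 c2 c3 :
  ((r4 c0 c1 c2 c3) 0 o0 = c0) * ((r4 c0 c1 c2 c3) 0 o1 = c1) *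
  ((r4 c0 c1 c2 c3) 0 o2 = c2) * ((r4 c0 c1 c2 c3) 0 o3 = c3).
Proof. by rewrite !mxE. Qed.

Lemma r3E c0 c1 c2 :
  ((r3 c0 c1 c2) 0 p0 = c0) * ((r3 c0 c1 c2) 0 p1 = c1) * ((r3 c0 c1 c2) 0 p2 = c2).
Proof. by rewrite !mxE. Qed.

Lemma r4_eta (v : 'rV[C]_4) : v = r4 (v 0 o0) (v 0 o1) (v 0 o2) (v 0 o3).
Proof. by apply/rowP; apply: ord4P; rewrite !mxE. Qed.

Lemma r4_congr a0 a1 a2 a3 b0 b1 b2 b3 :
  a0 = b0 -> a1 = b1 -> a2 = b2 -> a3 = b3 -> r4 a0 a1 a2 a3 = r4 b0 b1 b2 b3.
Proof. by move=> -> -> -> ->. Qed.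

Lemma r3_congr a0 a1 a2 b0 b1 b2 : a0 = b0 -> a1 = b1 -> a2 = b2 -> r3 a0 a1 a2 = r3 b0 b1 b2.
Proof. by move=> -> -> ->. Qed.

Lemma r4_inj a0 a1 a2 a3 b0 b1 b2 b3 :
  r4 a0 a1 a2 a3 = r4 b0 b1 b2 b3 -> [/\ a0 = b0, a1 = b1, a2 = b2 & a3 = b3].
Proof.
move=> h; have := congr1 (fun v : 'rV[C]_4 => (v 0 o0, v 0 o1, v 0 o2, v 0 o3)) h.
by rewrite !r4E => -[].
Qed.

Lemma r3_inj a0 a1 a2 b0 b1 b2 :
  r3 a0 a1 a2 = r3 b0 b1 b2 -> [/\ a0 = b0, a1 = b1 & a2 = b2].
Proof.
move=> h; have := congr1 (fun v : 'rV[C]_3 => (v 0 p0, v 0 p1, v 0 p2)) h.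
by rewrite !r3E => -[].
Qed.

Lemma r4_0 : r4 0 0 0 0 = 0.
Proof. by apply/rowP; apply: ord4P; rewrite !mxE. Qed.

Lemma r3_0 : r3 0 0 0 = 0.
Proof. by apply/rowP; apply: ord3P; rewrite !mxE. Qed.

Lemma r4D a0 a1 a2 a3 b0 b1 b2 b3 :
  r4 a0 a1 a2 a3 + r4 b0 b1 b2 b3 = r4 (a0 + b0) (a1 + b1) (a2 + b2) (a3 + b3).
Proof. by apply/rowP; apply: ord4P; rewrite !mxE. Qed.

Lemma r4B a0 a1 a2 a3 b0 b1 b2 b3 :
  r4 a0 a1 a2 a3 - r4 b0 b1 b2 b3 = r4 (a0 - b0) (a1 - b1) (a2 - b2) (a3 - b3).
Proof. by apply/rowP; apply: ord4P; rewrite !mxE. Qed.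

Lemma r3D a0 a1 a2 b0 b1 b2 : r3 a0 a1 a2 + r3 b0 b1 b2 = r3 (a0 + b0) (a1 + b1) (a2 + b2).
Proof. by apply/rowP; apply: ord3P; rewrite !mxE. Qed.

Lemma r3Z c a0 a1 a2 : c *: r3 a0 a1 a2 = r3 (c * a0) (c * a1) (c * a2).
Proof. by apply/rowP; apply: ord3P; rewrite !mxE. Qed.

Lemma mulmx_r4 (v : 'rV[C]_4) (P : 'M[C]_4) :
  v *m P = r4 (v 0 o0 * P o0 o0 + v 0 o1 * P o1 o0 + v 0 o2 * P o2 o0 + v 0 o3 * P o3 o0)
              (v 0 o0 * P o0 o1 + v 0 o1 * P o1 o1 + v 0 o2 * P o2 o1 + v 0 o3 * P o3 o1)
              (v 0 o0 * P o0 o2 + v 0 o1 * P o1 o2 + v 0 o2 * P o2 o2 + v 0 o3 * P o3 o2)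
              (v 0 o0 * P o0 o3 + v 0 o1 * P o1 o3 + v 0 o2 * P o2 o3 + v 0 o3 * P o3 o3).
Proof. by apply/rowP; apply: ord4P; rewrite !mxE sum4. Qed.

Lemma amul_CD3_03 x y : amul CD3_03 x y = r3 0 (x 0 p0 * y 0 p0) (x 0 p1 * y 0 p0).
Proof.
have CDE (i j k : 'I_3) : CD3_03 i j 0 k =
    (if Nat.eqb i 0 && Nat.eqb j 0 && Nat.eqb k 1 then 1 else 0) +
    (if Nat.eqb i 1 && Nat.eqb j 0 && Nat.eqb k 2 then 1 else 0).
  have eq_inord3 (m : nat) : (m < 3)%N -> (k == inord m) = ((k : nat) == m).
    by move=> hm; rewrite -val_eqE /= inordK.
  case: i => [[|[|[|i]]] Hi] //; case: j => [[|[|[|j]]] Hj] //=;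
    rewrite /CD3_03 /= ?mxE ?eq_inord3 // ?eqnb;
    by case: (Nat.eqb k 1); case: (Nat.eqb k 2); rewrite ?add0r ?addr0.
apply/rowP; apply: ord3P; rewrite amulE;
  under eq_bigr => i _ do under eq_bigr => j _ do rewrite CDE;
  rewrite !sum3; cbn [Nat.eqb andb nat_of_ord p0 p1 p2]; rewrite !mxE;
  cbn [nth nat_of_ord p0 p1 p2]; ring.
Qed.

(* A function th : nat -> nat -> C
   is read as a bilinear form on C^4 in the 1-based basis e1, ..., e4;
   Ext th is the algebra with e1 e1 = e2, e2 e1 = e3 and an extra component
   th i j along e4 in every product e_i e_j. *)
Definition Ext (th : nat -> nat -> C) : sconst 4 := fun i j =>
  let i' := (i : nat).+1 in let j' := (j : nat).+1 in
  (if (i' == 1%N) && (j' == 1%N) then bvec 3 2 else 0)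
  + (if (i' == 2%N) && (j' == 1%N) then bvec 3 3 else 0)
  + th i' j' *: bvec 3 4.

Lemma Nalg_Ext l : Nalg l = Ext (Ncoef l). Proof. by []. Qed.

(* th vanishes as soon as e4 is involved: e4 is then central and annihilating. *)
Definition e4free (th : nat -> nat -> C) := forall k, th 4%N k = 0 /\ th k 4%N = 0.

Lemma Ncoef_e4free l : e4free (Ncoef l).
Proof. by move=> k; case: l => *; split => //=; case: k => [|[|[|[|k]]]]. Qed.

Lemma Ext_coord th (i j k : 'I_4) : (Ext th i j) 0 k =
  ((if Nat.eqb i 0 && Nat.eqb j 0 && Nat.eqb k 1 then 1 else 0)
  + (if Nat.eqb i 1 && Nat.eqb j 0 && Nat.eqb k 2 then 1 else 0)
  + th i.+1 j.+1 * (if Nat.eqb k 3 then 1 else 0)).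
Proof.
have eq_inord4 (m : nat) : (m < 4)%N -> (k == inord m) = ((k : nat) == m).
  by move=> hm; rewrite -val_eqE /= inordK.
rewrite /Ext !mxE; case: ifP => _; case: ifP => _; rewrite ?mxE ?eq_inord4 // !eqnb;
  by case: (Nat.eqb i 0); case: (Nat.eqb i 1); case: (Nat.eqb j 0);
     case: (Nat.eqb k 1); case: (Nat.eqb k 2); case: (Nat.eqb k 3).
Qed.

Definition bil4 (th : nat -> nat -> C) x0 x1 x2 x3 y0 y1 y2 y3 :=
  x0 * y0 * th 1%N 1%N + x0 * y1 * th 1%N 2%N + x0 * y2 * th 1%N 3%N + x0 * y3 * th 1%N 4%N +
  x1 * y0 * th 2%N 1%N + x1 * y1 * th 2%N 2%N + x1 * y2 * th 2%N 3%N + x1 * y3 * th 2%N 4%N +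
  x2 * y0 * th 3%N 1%N + x2 * y1 * th 3%N 2%N + x2 * y2 * th 3%N 3%N + x2 * y3 * th 3%N 4%N +
  x3 * y0 * th 4%N 1%N + x3 * y1 * th 4%N 2%N + x3 * y2 * th 4%N 3%N + x3 * y3 * th 4%N 4%N.

Lemma amul_Ext th x y : amul (Ext th) x y =
  r4 0 (x 0 o0 * y 0 o0) (x 0 o1 * y 0 o0)
     (bil4 th (x 0 o0) (x 0 o1) (x 0 o2) (x 0 o3) (y 0 o0) (y 0 o1) (y 0 o2) (y 0 o3)).
Proof.
apply/rowP; apply: ord4P; rewrite amulE !mxE /bil4;
  under eq_bigr => i _ do under eq_bigr => j _ do rewrite Ext_coord;
  rewrite !sum4; cbn [Nat.eqb andb nat_of_ord o0 o1 o2 o3 nth]; ring.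
Qed.

Lemma amul_Ext_r4 th x0 x1 x2 x3 y0 y1 y2 y3 :
  amul (Ext th) (r4 x0 x1 x2 x3) (r4 y0 y1 y2 y3) =
  r4 0 (x0 * y0) (x1 * y0) (bil4 th x0 x1 x2 x3 y0 y1 y2 y3).
Proof. by rewrite amul_Ext !r4E. Qed.

Lemma Ext_is_CD th : e4free th -> th 3 2 = 0 -> th 3 3 = 0 -> th 2 3 = 0 ->
  th 3 1 = - (2 * th 1 3) -> is_CD (Ext th).
Proof.
move=> nt e32 e33 e23 e31.
have [n1 n1'] := nt 1%N; have [n2 n2'] := nt 2%N; have [n3 n3'] := nt 3%N.
have [n4 _] := nt 4%N.
move=> x y a b; rewrite [x]r4_eta [y]r4_eta [a]r4_eta [b]r4_eta.
do 4 rewrite ?amul_Ext_r4 ?r4D ?r4B.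
by split; [|split]; apply: r4_congr;
  rewrite /bil4 ?e32 ?e33 ?e23 ?e31 ?n1 ?n1' ?n2 ?n2' ?n3 ?n3' ?n4; ring.
Qed.

(* Let f : B -> CD^3_03 be the quotient map
   by Ann(B) = C av.  Lifting e1 to E1, the vectors E1, E2 = E1 E1,
   E3 = E2 E1, av form a basis of B in which the product is that of
   CD^3_03 plus a component along av; so B is isomorphic to some Ext th. *)
Section Reduction.
Variables (T : sconst 4) (f : 'M[C]_(4, 3)) (av E1 : 'rV[C]_4).
Hypothesis f_hom : forall x y, amul T x y *m f = amul CD3_03 (x *m f) (y *m f).
Hypothesis av_neq0 : av != 0.
Hypothesis av_ann : in_ann T av.
Hypothesis av_f : av *m f = 0.
Hypothesis E1_f : E1 *m f = r3 1 0 0.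

Definition adapted_basis : 'M[C]_4 :=
  \matrix_(i < 4) nth 0 [:: E1; amul T E1 E1; amul T (amul T E1 E1) E1; av] i.

Lemma adapted_row i :
  row i adapted_basis = nth 0 [:: E1; amul T E1 E1; amul T (amul T E1 E1) E1; av] i.
Proof. exact: rowK. Qed.

Lemma adapted_row_f (i : 'I_4) : row i adapted_basis *m f =
  r3 (if Nat.eqb i 0 then 1 else 0) (if Nat.eqb i 1 then 1 else 0) (if Nat.eqb i 2 then 1 else 0).
Proof.
have E2_f : amul T E1 E1 *m f = r3 0 1 0.
  by rewrite f_hom E1_f amul_CD3_03 !r3E; apply: r3_congr; ring.
have E3_f : amul T (amul T E1 E1) E1 *m f = r3 0 0 1.
  by rewrite f_hom E2_f E1_f amul_CD3_03 !r3E; apply: r3_congr; ring.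
move: i; apply: ord4P; rewrite adapted_row; cbn [nth nat_of_ord o0 o1 o2 o3 Nat.eqb] => //.
by rewrite av_f r3_0.
Qed.

Lemma adapted_coord_f (w : 'rV[C]_4) :
  w *m (adapted_basis *m f) = r3 (w 0 o0) (w 0 o1) (w 0 o2).
Proof.
rewrite mulmx_sum_row sum4 !row_mul !adapted_row_f; cbn [nat_of_ord o0 o1 o2 o3 Nat.eqb].
by rewrite !r3Z !r3D; apply: r3_congr; ring.
Qed.

(* the adapted vectors are independent: their images are e1, e2, e3, and av <> 0 *)
Lemma adapted_unit : adapted_basis \in unitmx.
Proof.
apply: unitmx_ker0 => v hv.
have := congr1 (mulmx^~ f) hv; rewrite -mulmxA adapted_coord_f mul0mx -r3_0.
case/r3_inj => v0 v1 v2.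
move: hv; rewrite mulmx_sum_row sum4 !adapted_row; cbn [nth nat_of_ord o0 o1 o2 o3].
rewrite v0 v1 v2 !scale0r !add0r => /eqP; rewrite scaler_eq0 (negbTE av_neq0) orbF.
by move=> /eqP v3; rewrite [v]r4_eta v0 v1 v2 v3 r4_0.
Qed.

(* the e4-component of the product of two basis vectors *)
Definition adapted_cocycle (i j : nat) : C :=
  if ((0 < i <= 4) && (0 < j <= 4))%N then
    (amul T (row (inord i.-1) adapted_basis) (row (inord j.-1) adapted_basis)
       *m invmx adapted_basis) 0 o3
  else 0.

Lemma adapted_cocycle_e4free : e4free adapted_cocycle.
Proof.
have e4 : row (inord 3) adapted_basis = av.
  by rewrite adapted_row (_ : inord 3 = o3) //; apply: val_inj; rewrite /= inordK.
move=> k; rewrite /adapted_cocycle; split; case: ifP => // _;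
  by rewrite /= e4 ?(av_ann _).1 ?(av_ann _).2 mul0mx mxE.
Qed.

Lemma adapted_structure (i j : 'I_4) :
  Ext adapted_cocycle i j *m adapted_basis = amul T (row i adapted_basis) (row j adapted_basis).
Proof.
pose w := amul T (row i adapted_basis) (row j adapted_basis) *m invmx adapted_basis.
suff -> : Ext adapted_cocycle i j = w by rewrite /w mulmxKV // adapted_unit.
have hw : w *m (adapted_basis *m f) =
    amul CD3_03 (row i adapted_basis *m f) (row j adapted_basis *m f).
  by rewrite mulmxA /w mulmxKV ?adapted_unit // f_hom.
rewrite adapted_coord_f !adapted_row_f amul_CD3_03 !r3E in hw.
case/r3_inj: hw => w0 w1 w2.
have w3 : adapted_cocycle i.+1 j.+1 = w 0 o3.
  by rewrite /adapted_cocycle (ltn_ord i) (ltn_ord j) /= !inord_val.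
apply/rowP; apply: ord4P; rewrite Ext_coord; cbn [Nat.eqb nat_of_ord o0 o1 o2 o3];
  rewrite ?w0 ?w1 ?w2 ?w3; case: (Nat.eqb i 0); case: (Nat.eqb i 1); case: (Nat.eqb j 0);
  rewrite ?andbF ?andbT; ring.
Qed.

Lemma adapted_iso : alg_iso T (Ext adapted_cocycle).
Proof.
have Qu := adapted_unit.
exists (invmx adapted_basis); split; first by rewrite unitmx_inv.
move=> x y; apply: (can_inj (mulmxK Qu)).
by rewrite mulmxKV // (@amul_hom_rows 4 T _ _ adapted_structure) !mulmxKV.
Qed.

End Reduction.

Lemma reduce_to_Ext (T : sconst 4) : ann_dim1 T -> quot_ann_iso T CD3_03 ->
  exists th, e4free th /\ alg_iso T (Ext th).
Proof.
case=> av [av0 hav] [f [ff [fh fk]]].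
have avann : in_ann T av by apply/hav; exists 1; rewrite scale1r.
have avf : av *m f = 0 by apply/fk.
have [E1 hE1] : exists E1 : 'rV[C]_4, E1 *m f = r3 1 0 0.
  by case/submxP: (submx_full (r3 1 0 0) ff) => D hD; exists D; rewrite hD.
exists (adapted_cocycle T av E1); split; first exact: adapted_cocycle_e4free.
exact: adapted_iso.
Qed.

(* For a, lam <> 0 and any b, c, the vectors
   f1 = a e1 + b e2 + c e3 + (..) e4, f2 = f1 f1, f3 = f2 f1, f4 = lam e4
   form a basis of Ext th in which the structure constants are those of
   Ext (act a b c lam th).  These are exactly the automorphisms of CD^3_03
   lifted to the extension; normalising th with them gives the list N_l. *)
Definition act (a b c lam : C) (t : nat -> nat -> C) : nat -> nat -> C := fun i j =>
  match i, j with
  | 1, 2 => lam^-1 * (a^+3 * t 1%N 2%N + a^+2 * b * t 1%N 3%N + a^+2 * b * t 2%N 2%N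
              + a * b^+2 * t 2%N 3%N + a^+2 * c * t 3%N 2%N + a * b * c * t 3%N 3%N)
  | 1, 3 => lam^-1 * (a^+4 * t 1%N 3%N + a^+3 * b * t 2%N 3%N + a^+3 * c * t 3%N 3%N)
  | 2, 2 => lam^-1 * (a^+4 * t 2%N 2%N + a^+3 * b * (t 2%N 3%N + t 3%N 2%N)
              + a^+2 * b^+2 * t 3%N 3%N)
  | 2, 3 => lam^-1 * (a^+5 * t 2%N 3%N + a^+4 * b * t 3%N 3%N)
  | 3, 1 => lam^-1 * (a^+4 * t 3%N 1%N + a^+3 * b * t 3%N 2%N + a^+3 * c * t 3%N 3%N)
  | 3, 2 => lam^-1 * (a^+5 * t 3%N 2%N + a^+4 * b * t 3%N 3%N)
  | 3, 3 => lam^-1 * (a^+6 * t 3%N 3%N)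
  | _, _ => 0
  end.

(* the matrix (rows f1, ..., f4) of the change of basis; e and g are the
   e4-components of f2 and f3 *)
Definition basis_change (a b c e g lam : C) : 'M[C]_4 :=
  \matrix_(i < 4, j < 4)
  match (i : nat), (j : nat) with
  | 0, 0 => a | 0, 1 => b | 0, 2 => c
  | 1, 1 => a^+2 | 1, 2 => a * b | 1, 3 => e
  | 2, 2 => a^+3 | 2, 3 => g
  | 3, 3 => lam
  | _, _ => 0
  end.

Lemma basis_change_unit a b c e g lam : a != 0 -> lam != 0 ->
  basis_change a b c e g lam \in unitmx.
Proof.
move=> a0 l0; apply: unitmx_ker0 => v; rewrite mulmx_r4 !mxE -r4_0.
case/r4_inj; cbn [nat_of_ord o0 o1 o2 o3]; rewrite !mulr0 !addr0 => h0 h1 h2 h3.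
move/eqP: h0; rewrite mulf_eq0 (negbTE a0) orbF => /eqP v0.
move: h1; rewrite v0 mul0r add0r => /eqP; rewrite mulf_eq0 expf_eq0 (negbTE a0) andbF orbF.
move=> /eqP v1; move: h2; rewrite v0 v1 !mul0r !add0r => /eqP.
rewrite mulf_eq0 expf_eq0 (negbTE a0) andbF orbF => /eqP v2.
move: h3; rewrite v1 v2 !mul0r !add0r => /eqP; rewrite mulf_eq0 (negbTE l0) orbF.
by move=> /eqP v3; rewrite [v]r4_eta v0 v1 v2 v3.
Qed.

Lemma Ext_act_iso a b c lam th : a != 0 -> lam != 0 -> e4free th ->
  alg_iso (Ext (act a b c lam th)) (Ext th).
Proof.
move=> a0 l0 nt.
pose e := a*a*th 1%N 1%N + a*b*th 1%N 2%N + a*c*th 1%N 3%N + b*a*th 2%N 1%N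
  + b*b*th 2%N 2%N + b*c*th 2%N 3%N + c*a*th 3%N 1%N + c*b*th 3%N 2%N + c*c*th 3%N 3%N.
pose g := a^+2*a*th 2%N 1%N + a^+2*b*th 2%N 2%N + a^+2*c*th 2%N 3%N + a*b*a*th 3%N 1%N
  + a*b*b*th 3%N 2%N + a*b*c*th 3%N 3%N.
exists (basis_change a b c e g lam); split; first exact: basis_change_unit.
move=> x y; rewrite !amul_Ext !mulmx_r4 !r4E /bil4 !mxE.
have [h1 h1'] := nt 1%N; have [h2 h2'] := nt 2%N; have [h3 h3'] := nt 3%N.
have [h4 h4'] := nt 4%N.
cbn [act nat_of_ord o0 o1 o2 o3]; rewrite ?h1 ?h1' ?h2 ?h2' ?h3 ?h3' ?h4 ?h4'.
by apply: r4_congr; rewrite /e /g; [ring | ring | ring | field].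
Qed.

Lemma eq_cocycle (t u : nat -> nat -> C) : (forall i j, t i j = u i j) -> t = u.
Proof.
by move=> h; apply: functional_extensionality => i; apply: functional_extensionality.
Qed.

Lemma act_eq_Ncoef a b c lam th l :
  act a b c lam th 1 2 = Ncoef l 1 2 -> act a b c lam th 1 3 = Ncoef l 1 3 ->
  act a b c lam th 2 2 = Ncoef l 2 2 -> act a b c lam th 2 3 = Ncoef l 2 3 ->
  act a b c lam th 3 1 = Ncoef l 3 1 -> act a b c lam th 3 2 = Ncoef l 3 2 ->
  act a b c lam th 3 3 = Ncoef l 3 3 -> act a b c lam th = Ncoef l.
Proof.
move=> h12 h13 h22 h23 h31 h32 h33; apply: eq_cocycle => i j.
by case: i => [|[|[|[|i]]]]; case: j => [|[|[|[|j]]]] //; case: l {h12 h13 h22 h23 h31 h32 h33}.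
Qed.

Lemma Ext_iso_N th a b c lam l : e4free th -> a != 0 -> lam != 0 -> Nadm l ->
  act a b c lam th = Ncoef l -> exists l0, Nadm l0 /\ alg_iso (Ext th) (Nalg l0).
Proof.
move=> nt a0 l0 al h; exists l; split => //; rewrite Nalg_Ext -h.
by apply: alg_iso_sym; apply: Ext_act_iso.
Qed.

Arguments Ext_iso_N {th} a b c lam l.

Definition classified (th : nat -> nat -> C) :=
  exists l, Nadm l /\ alg_iso (Ext th) (Nalg l).

(* Normal forms when th33 <> 0: b and c kill the entries (3,2) and (1,3) and
   lam makes (3,3) equal to 1; the remaining freedom a is used on (2,3),
   then (3,1), (2,2), (1,2), giving N28, N29, N31, N33, N41. *)
Section Normalize33.
Variable th : nat -> nat -> C.
Hypotheses (nt : e4free th) (h33 : th 3 3 != 0).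

Let b a := - a * th 3 2 / th 3 3.
Let c a := - (a * th 1 3 + b a * th 2 3) / th 3 3.
Let th' a := act a (b a) (c a) (a ^+ 6 * th 3 3) th.

Let normalize a l : a != 0 -> Nadm l -> th' a = Ncoef l -> classified th.
Proof. by move=> a0; apply: Ext_iso_N; rewrite ?mulf_neq0 ?expf_neq0. Qed.

Lemma classify33_sym : th 2 3 = th 3 2 -> th 3 1 = th 1 3 -> classified th.
Proof.
move=> e23 e31.
pose h := (th 2 2 * th 3 3 - th 3 2 ^+ 2) / th 3 3 ^+ 2.
case: (eqVneq h 0) => [h0 | h0]; last first.
  have [a a0 ha] := root_neq0 1 h0.
  have e22 : th 2 2 = (th 3 2 ^+ 2 + a ^+ 2 * th 3 3 ^+ 2) / th 3 3 by rewrite ha /h; field.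
  apply: (normalize a (N31 (th' a 1 2)) a0) => //.
  by apply: act_eq_Ncoef; rewrite /th' /c /b; cbn [Ncoef act]; rewrite ?e22 ?e31 ?e23;
    field; rewrite ?h33 ?a0.
have e22 : th 2 2 = th 3 2 ^+ 2 / th 3 3.
  apply: (lin_comb1 (th 3 3) h0); rewrite /h; field; by rewrite h33.
pose k := (th 1 2 - th 3 2 * th 1 3 / th 3 3) / th 3 3.
case: (eqVneq k 0) => [k0 | k0]; last first.
  have [a a0 ha] := root_neq0 2 k0.
  have e12 : th 1 2 = th 3 2 * th 1 3 / th 3 3 + a ^+ 3 * th 3 3 by rewrite ha /k; field.
  apply: (normalize a N33 a0) => //.
  by apply: act_eq_Ncoef; rewrite /th' /c /b; cbn [Ncoef act]; rewrite ?e12 ?e22 ?e31 ?e23;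
    field; rewrite ?h33 ?a0.
have e12 : th 1 2 = th 3 2 * th 1 3 / th 3 3.
  apply: (lin_comb1 (th 3 3) k0); rewrite /k; field; by rewrite h33.
apply: (normalize 1 N41) => //; first exact: oner_neq0.
by apply: act_eq_Ncoef; rewrite /th' /c /b; cbn [Ncoef act]; rewrite ?e12 ?e22 ?e31 ?e23;
  field; rewrite ?h33.
Qed.

Lemma classify33 : classified th.
Proof.
case: (eqVneq (th 2 3) (th 3 2)) => [e23 | d0]; last first.
  pose a := (th 2 3 - th 3 2) / th 3 3.
  have a0 : a != 0 by rewrite mulf_neq0 ?invr_eq0 ?subr_eq0.
  apply: (normalize a (N28 (th' a 1 2) (th' a 2 2) (th' a 3 1)) a0) => //.
  by apply: act_eq_Ncoef; rewrite /th' /c /b /a; cbn [Ncoef act];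
    field; rewrite ?h33 ?subr_eq0 ?d0.
pose g := (th 3 1 - th 1 3) / th 3 3.
case: (eqVneq g 0) => [g0 | g0].
  apply: classify33_sym => //.
  apply: (lin_comb1 (th 3 3) g0); rewrite /g; field; by rewrite h33.
have [a a0 ha] := root_neq0 1 g0.
have e31 : th 3 1 = th 1 3 + a ^+ 2 * th 3 3 by rewrite ha /g; field.
apply: (normalize a (N29 (th' a 1 2) (th' a 2 2)) a0) => //.
by apply: act_eq_Ncoef; rewrite /th' /c /b; cbn [Ncoef act]; rewrite ?e31 ?e23;
  field; rewrite ?h33 ?a0.
Qed.

End Normalize33.

(* Normal forms when th33 = 0 and th32 <> 0: lam = a^5 th32 makes (3,2)
   equal to 1 and c kills (1,2); b is used to kill (3,1) + 2 (1,3) when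
   th23 = 0 (giving N35, N38, N40) and to kill (1,3) otherwise (giving
   N36, N37, N40). *)
Section Normalize32.
Variable th : nat -> nat -> C.
Hypotheses (nt : e4free th) (e33 : th 3 3 = 0) (h32 : th 3 2 != 0).

Let c a b := - (a * th 1 2 + b * (th 1 3 + th 2 2) + b ^+ 2 * th 2 3 / a) / th 3 2.
Let th' a b := act a b (c a b) (a ^+ 5 * th 3 2) th.

Let normalize a b l : a != 0 -> Nadm l -> th' a b = Ncoef l -> classified th.
Proof. by move=> a0; apply: Ext_iso_N; rewrite ?mulf_neq0 ?expf_neq0. Qed.

Lemma classify32_23zero : th 2 3 = 0 -> classified th.
Proof.
move=> e23.
pose b a := - a * (th 3 1 + 2 * th 1 3) / th 3 2.
pose u := th 2 2 - th 3 1 - 2 * th 1 3.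
case: (eqVneq u 0) => [u0 | u0]; last first.
  pose a := u / th 3 2.
  have a0 : a != 0 by rewrite mulf_neq0 ?invr_eq0.
  apply: (normalize a (b a) (N35 (th' a (b a) 1 3)) a0) => //.
  by apply: act_eq_Ncoef; rewrite /th' /c /b /a /u; cbn [Ncoef act]; rewrite ?e33 ?e23;
    field; rewrite ?h32 -?/u ?u0.
have e22 : th 2 2 = th 3 1 + 2 * th 1 3 by apply: (lin_comb1 1 u0); rewrite /u; ring.
case: (eqVneq (th 1 3) 0) => [e13 | h13].
  apply: (normalize 1 (b 1) (N40 (th' 1 (b 1) 2 3))) => //; first exact: oner_neq0.
  by apply: act_eq_Ncoef; rewrite /th' /c /b; cbn [Ncoef act]; rewrite ?e33 ?e23 ?e22 ?e13;
    field; rewrite ?h32.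
pose a := th 1 3 / th 3 2.
have a0 : a != 0 by rewrite mulf_neq0 ?invr_eq0.
apply: (normalize a (b a) N38 a0) => //.
by apply: act_eq_Ncoef; rewrite /th' /c /b /a; cbn [Ncoef act]; rewrite ?e33 ?e23 ?e22;
  field; rewrite ?h32 ?h13.
Qed.

Lemma classify32_23nonzero : th 2 3 != 0 -> classified th.
Proof.
move=> h23.
pose b a := - a * th 1 3 / th 2 3.
have t23 a : a != 0 -> th' a (b a) 2 3 = th 2 3 / th 3 2.
  by move=> a0; rewrite /th'; cbn [act]; rewrite e33; field; rewrite ?h32.
have ad : th 2 3 / th 3 2 != 0 by rewrite mulf_neq0 ?invr_eq0.
pose p := th 3 1 - th 1 3 * th 3 2 / th 2 3.
case: (eqVneq p 0) => [p0 | p0]; last first.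
  pose a := p / th 3 2.
  have a0 : a != 0 by rewrite mulf_neq0 ?invr_eq0.
  apply: (normalize a (b a) (N36 (th' a (b a) 2 2) (th' a (b a) 2 3)) a0); first by rewrite /Nadm t23.
  have p1 : th 3 1 * th 2 3 - th 1 3 * th 3 2 != 0.
    by apply: contra_neq p0 => p1; apply: (lin_comb1 (th 2 3)^-1 p1); rewrite /p; field.
  by apply: act_eq_Ncoef; rewrite /th' /c /b /a /p; cbn [Ncoef act]; rewrite ?e33;
    field; rewrite ?h32 ?h23 ?p1.
have e31 : th 3 1 = th 1 3 * th 3 2 / th 2 3 by apply: (lin_comb1 1 p0); rewrite /p; ring.
pose q := th 2 2 - th 1 3 * (th 2 3 + th 3 2) / th 2 3.
case: (eqVneq q 0) => [q0 | q0]; last first.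
  pose a := q / th 3 2.
  have a0 : a != 0 by rewrite mulf_neq0 ?invr_eq0.
  apply: (normalize a (b a) (N37 (th' a (b a) 2 3)) a0); first by rewrite /Nadm t23.
  have q1 : th 2 2 * th 2 3 - th 1 3 * (th 2 3 + th 3 2) != 0.
    by apply: contra_neq q0 => q1; apply: (lin_comb1 (th 2 3)^-1 q1); rewrite /q; field.
  by apply: act_eq_Ncoef; rewrite /th' /c /b /a /q; cbn [Ncoef act]; rewrite ?e33 ?e31;
    field; rewrite ?h32 ?h23 ?q1.
have e22 : th 2 2 = th 1 3 * (th 2 3 + th 3 2) / th 2 3.
  by apply: (lin_comb1 1 q0); rewrite /q; ring.
apply: (normalize 1 (b 1) (N40 (th' 1 (b 1) 2 3))) => //; first exact: oner_neq0.
by apply: act_eq_Ncoef; rewrite /th' /c /b; cbn [Ncoef act]; rewrite ?e33 ?e31 ?e22;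
  field; rewrite ?h32 ?h23.
Qed.

End Normalize32.

(* Normal forms when th33 = th32 = 0 and th23 <> 0: lam = a^5 th23 makes
   (2,3) equal to 1 and b kills (1,3); a is then used on (3,1), (2,2) - (1,3)
   and (1,2), giving N27, N30, N32, N39. *)
Section Normalize23.
Variable th : nat -> nat -> C.
Hypotheses (nt : e4free th) (e33 : th 3 3 = 0) (e32 : th 3 2 = 0) (h23 : th 2 3 != 0).

Let b a := - a * th 1 3 / th 2 3.
Let th' a := act a (b a) 0 (a ^+ 5 * th 2 3) th.

Let normalize a l : a != 0 -> Nadm l -> th' a = Ncoef l -> classified th.
Proof. by move=> a0; apply: Ext_iso_N; rewrite ?mulf_neq0 ?expf_neq0. Qed.

Lemma classify23_degenerate : th 3 1 = 0 -> th 2 2 = th 1 3 -> classified th.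
Proof.
move=> e31 e22.
pose w := (th 1 2 - th 1 3 ^+ 2 / th 2 3) / th 2 3.
case: (eqVneq w 0) => [w0 | w0].
  have e12 : th 1 2 = th 1 3 ^+ 2 / th 2 3.
    apply: (lin_comb1 (th 2 3) w0); rewrite /w; field; by rewrite h23.
  apply: (normalize 1 N39) => //; first exact: oner_neq0.
  by apply: act_eq_Ncoef; rewrite /th' /b; cbn [Ncoef act];
    rewrite ?e33 ?e32 ?e31 ?e22 ?e12; field; rewrite ?h23.
have [a a0 ha] := root_neq0 1 w0.
have e12 : th 1 2 = th 1 3 ^+ 2 / th 2 3 + a ^+ 2 * th 2 3 by rewrite ha /w; field.
apply: (normalize a N32 a0) => //.
by apply: act_eq_Ncoef; rewrite /th' /b; cbn [Ncoef act];
  rewrite ?e33 ?e32 ?e31 ?e22 ?e12; field; rewrite ?h23 ?a0.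
Qed.

Lemma classify23 : classified th.
Proof.
case: (eqVneq (th 3 1) 0) => [e31 | h31]; last first.
  pose a := th 3 1 / th 2 3.
  have a0 : a != 0 by rewrite mulf_neq0 ?invr_eq0.
  apply: (normalize a (N27 (th' a 1 2) (th' a 2 2)) a0) => //.
  by apply: act_eq_Ncoef; rewrite /th' /b /a; cbn [Ncoef act]; rewrite ?e33 ?e32;
    field; rewrite ?h23 ?h31.
pose v := th 2 2 - th 1 3.
case: (eqVneq v 0) => [v0 | v0].
  by apply: classify23_degenerate => //; apply: (lin_comb1 1 v0); rewrite /v; ring.
pose a := v / th 2 3.
have a0 : a != 0 by rewrite mulf_neq0 ?invr_eq0.
apply: (normalize a (N30 (th' a 1 2)) a0) => //.
by apply: act_eq_Ncoef; rewrite /th' /b /a /v; cbn [Ncoef act]; rewrite ?e33 ?e32 ?e31;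
  field; rewrite ?h23 -?/v ?v0.
Qed.

End Normalize23.

(* Normal forms when th33 = th32 = th23 = 0 and th31 + 2 th13 <> 0 (the
   remaining non-CD cocycles): lam = a^4 (th31 + 2 th13) and b kills (1,2)
   if possible, giving N34 and N26. *)
Lemma classify_rest th : e4free th -> th 3 3 = 0 -> th 3 2 = 0 -> th 2 3 = 0 ->
  th 3 1 + 2 * th 1 3 != 0 -> classified th.
Proof.
move=> nt e33 e32 e23 hm.
pose lam := th 3 1 + 2 * th 1 3.
have a1 : (1 : C) != 0 by exact: oner_neq0.
case: (eqVneq (th 1 3 + th 2 2) 0) => [s0 | s0]; last first.
  pose b := - th 1 2 / (th 1 3 + th 2 2).
  apply: (Ext_iso_N 1 b 0 lam (N34 (act 1 b 0 lam th 2 2) (act 1 b 0 lam th 1 3))) => //.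
  by apply: act_eq_Ncoef; cbn [Ncoef act]; rewrite /lam /b ?e33 ?e32 ?e23;
    field; rewrite ?hm ?s0.
have e22 : th 2 2 = - th 1 3 by apply: (lin_comb1 1 s0); ring.
case: (eqVneq (th 1 2) 0) => [e12 | h12].
  apply: (Ext_iso_N 1 0 0 lam (N34 (act 1 0 0 lam th 2 2) (act 1 0 0 lam th 1 3))) => //.
  by apply: act_eq_Ncoef; cbn [Ncoef act]; rewrite /lam ?e33 ?e32 ?e23 ?e12;
    field; rewrite ?hm.
pose a := th 1 2 / lam.
have a0 : a != 0 by rewrite mulf_neq0 ?invr_eq0.
apply: (Ext_iso_N a 0 0 (a ^+ 4 * lam) (N26 (act a 0 0 (a ^+ 4 * lam) th 2 2))) => //; first by rewrite mulf_neq0 ?expf_neq0.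
by apply: act_eq_Ncoef; cbn [Ncoef act]; rewrite /a /lam ?e33 ?e32 ?e23 ?e22;
  field; rewrite ?hm ?h12.
Qed.

Lemma classify th : e4free th ->
  ~ (th 3 2 = 0 /\ th 3 3 = 0 /\ th 2 3 = 0 /\ th 3 1 = - (2 * th 1 3)) ->
  classified th.
Proof.
move=> nt ncd.
case: (eqVneq (th 3 3) 0) => [e33 | h33]; last exact: classify33.
case: (eqVneq (th 3 2) 0) => [e32 | h32]; last first.
  case: (eqVneq (th 2 3) 0); [exact: classify32_23zero | exact: classify32_23nonzero].
case: (eqVneq (th 2 3) 0) => [e23 | h23]; last exact: classify23.
apply: classify_rest => //; apply/eqP => hm; apply: ncd; do 3! split => //.
by apply: (lin_comb1 1 hm); ring.
Qed.

(* Conversely to Ext_act_iso, every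
   isomorphism Ext th -> Ext u comes from a change of basis of the above
   triangular shape, so th and u are related by act; we record this as the
   seven entrywise equations lam * th = lam * act a b c lam u with the
   denominators cleared. *)
Definition orbit_eqs (a b c lam : C) (t u : nat -> nat -> C) : Prop :=
  [/\ lam * t 1%N 2%N = a^+3 * u 1%N 2%N + a^+2 * b * u 1%N 3%N + a^+2 * b * u 2%N 2%N
              + a * b^+2 * u 2%N 3%N + a^+2 * c * u 3%N 2%N + a * b * c * u 3%N 3%N,
      lam * t 1%N 3%N = a^+4 * u 1%N 3%N + a^+3 * b * u 2%N 3%N + a^+3 * c * u 3%N 3%N,
      lam * t 2%N 2%N = a^+4 * u 2%N 2%N + a^+3 * b * (u 2%N 3%N + u 3%N 2%N)
              + a^+2 * b^+2 * u 3%N 3%N,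
      lam * t 2%N 3%N = a^+5 * u 2%N 3%N + a^+4 * b * u 3%N 3%N &
   [/\ lam * t 3%N 1%N = a^+4 * u 3%N 1%N + a^+3 * b * u 3%N 2%N + a^+3 * c * u 3%N 3%N,
      lam * t 3%N 2%N = a^+5 * u 3%N 2%N + a^+4 * b * u 3%N 3%N &
      lam * t 3%N 3%N = a^+6 * u 3%N 3%N]].

(* e3 does not annihilate Ext u, i.e. Ann(Ext u) is exactly the line of e4 *)
Definition e3_not_ann (u : nat -> nat -> C) :=
  ~ [/\ u 3%N 1%N = 0, u 3%N 2%N = 0, u 3%N 3%N = 0, u 1%N 3%N = 0 & u 2%N 3%N = 0].

Section IsoShape.
Variables (th u : nat -> nat -> C) (P : 'M[C]_4).
Hypotheses (nth : e4free th) (nu : e4free u) (th11 : th 1 1 = 0) (th21 : th 2 1 = 0).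
Hypotheses (u_e3 : e3_not_ann u) (Pu : P \in unitmx).
Hypothesis PH : forall x y, amul (Ext th) x y *m P = amul (Ext u) (x *m P) (y *m P).

Let th4l k : th 4%N k = 0. Proof. exact: (nth k).1. Qed.
Let th4r k : th k 4%N = 0. Proof. exact: (nth k).2. Qed.
Let u4l k : u 4%N k = 0. Proof. exact: (nu k).1. Qed.
Let u4r k : u k 4%N = 0. Proof. exact: (nu k).2. Qed.

Local Ltac hom_at x y h :=
  have h := PH x y; rewrite !mulmx_r4 !amul_Ext_r4 !r4E in h; case/r4_inj: h.

(* f2 = f1 f1 and f3 = f2 f1, where f_i is the image of e_i *)
Lemma iso_row1 : [/\ P o1 o0 = 0, P o1 o1 = P o0 o0 ^+ 2 & P o1 o2 = P o0 o1 * P o0 o0].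
Proof.
hom_at (r4 1 0 0 0) (r4 1 0 0 0) h11 => h11_0 h11_1 h11_2 _.
by split; [apply: (lin_comb1 1 h11_0) | apply: (lin_comb1 1 h11_1) | apply: (lin_comb1 1 h11_2)];
  rewrite /bil4 th11; ring.
Qed.

Lemma iso_row2 : [/\ P o2 o0 = 0, P o2 o1 = 0 & P o2 o2 = P o0 o0 ^+ 3].
Proof.
have [f10 f11 _] := iso_row1.
hom_at (r4 0 1 0 0) (r4 1 0 0 0) h21 => h21_0 h21_1 h21_2 _.
by split; [apply: (lin_comb1 1 h21_0) | apply: (lin_comb1 1 h21_1) | apply: (lin_comb1 1 h21_2)];
  rewrite /bil4 th21 ?f10 ?f11; ring.
Qed.

(* f4 spans the annihilator, so it is a multiple of e4 *)
Lemma iso_row3 : [/\ P o3 o0 = 0, P o3 o1 = 0, P o3 o2 = 0, P o0 o0 != 0 & P o3 o3 != 0].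
Proof.
have [f10 f11 f12] := iso_row1; have [f20 f21 f22] := iso_row2.
hom_at (r4 0 0 0 1) (r4 0 0 0 1) h44 => _ h44_1 _ _.
have f30 : P o3 o0 = 0.
  have : P o3 o0 * P o3 o0 = 0 by apply: (lin_comb1 (-1) h44_1); rewrite /bil4 ?th4l; ring.
  by move/eqP; rewrite mulf_eq0 orbb => /eqP.
have a0 : P o0 o0 != 0.
  by apply/negP => /eqP a0; apply: (@unitmx_col_neq0 4 P o0 Pu); apply: ord4P.
hom_at (r4 0 0 0 1) (r4 1 0 0 0) h41 => _ _ h41_2 h41_3.
have f31 : P o3 o1 = 0.
  have : P o3 o1 * P o0 o0 = 0 by apply: (lin_comb1 (-1) h41_2); rewrite /bil4 ?th4l f30; ring.
  exact: mulf_cancel.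
have f32 : P o3 o2 = 0.
  apply/eqP/negPn/negP => q0; apply: u_e3.
  have cancel n X : P o3 o2 * (P o0 o0 ^+ n * X) = 0 -> X = 0.
    by rewrite mulrC => /(mulf_cancel q0)/(expf_cancel a0).
  hom_at (r4 0 0 0 1) (r4 0 0 1 0) h43 => _ _ _ h43_3.
  have u33 : u 3%N 3%N = 0.
    apply: (cancel 3%N); apply: (lin_comb1 (-1) h43_3).
    by rewrite /bil4 ?th4l f30 f31 f20 f21 f22 ?u4l ?u4r; ring.
  hom_at (r4 0 0 0 1) (r4 0 1 0 0) h42 => _ _ _ h42_3.
  have u32 : u 3%N 2%N = 0.
    apply: (cancel 2%N); apply: (lin_comb1 (-1) h42_3).
    by rewrite /bil4 ?th4l f30 f31 f10 f11 f12 u33 ?u4l ?u4r; ring.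
  have u31 : u 3%N 1%N = 0.
    apply: (cancel 1%N); apply: (lin_comb1 (-1) h41_3).
    by rewrite /bil4 ?th4l f30 f31 u33 u32 ?u4l ?u4r; ring.
  hom_at (r4 0 1 0 0) (r4 0 0 0 1) h24 => _ _ _ h24_3.
  have u23 : u 2%N 3%N = 0.
    apply: (cancel 2%N); apply: (lin_comb1 (-1) h24_3).
    by rewrite /bil4 ?th4r f30 f31 f10 f11 f12 u33 ?u4l ?u4r; ring.
  hom_at (r4 1 0 0 0) (r4 0 0 0 1) h14 => _ _ _ h14_3.
  have u13 : u 1%N 3%N = 0.
    apply: (cancel 1%N); apply: (lin_comb1 (-1) h14_3).
    by rewrite /bil4 ?th4r f30 f31 u33 u23 ?u4l ?u4r; ring.
  by split.
split => //.
by apply/negP => /eqP l0; apply: (@unitmx_row_neq0 4 P o3 Pu); apply: ord4P.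
Qed.

Lemma iso_orbit_eqs : orbit_eqs (P o0 o0) (P o0 o1) (P o0 o2) (P o3 o3) th u.
Proof.
have [f10 f11 f12] := iso_row1; have [f20 f21 f22] := iso_row2.
have [f30 f31 f32 _ _] := iso_row3.
hom_at (r4 1 0 0 0) (r4 0 1 0 0) h12 => _ _ _ h12_3.
hom_at (r4 1 0 0 0) (r4 0 0 1 0) h13 => _ _ _ h13_3.
hom_at (r4 0 1 0 0) (r4 0 1 0 0) h22 => _ _ _ h22_3.
hom_at (r4 0 1 0 0) (r4 0 0 1 0) h23 => _ _ _ h23_3.
hom_at (r4 0 0 1 0) (r4 1 0 0 0) h31 => _ _ _ h31_3.
hom_at (r4 0 0 1 0) (r4 0 1 0 0) h32 => _ _ _ h32_3.
hom_at (r4 0 0 1 0) (r4 0 0 1 0) h33 => _ _ _ h33_3.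
split; [ | | | | split ];
  [ apply: (lin_comb1 1 h12_3) | apply: (lin_comb1 1 h13_3) | apply: (lin_comb1 1 h22_3)
  | apply: (lin_comb1 1 h23_3) | apply: (lin_comb1 1 h31_3) | apply: (lin_comb1 1 h32_3)
  | apply: (lin_comb1 1 h33_3) ];
  by rewrite /bil4 f10 f11 f12 f20 f21 f22 f30 f31 f32 ?th4l ?th4r ?u4l ?u4r; ring.
Qed.

End IsoShape.

Lemma Ext_iso_orbit th u : e4free th -> e4free u -> th 1 1 = 0 -> th 2 1 = 0 ->
  e3_not_ann u -> alg_iso (Ext th) (Ext u) ->
  exists a b c lam, [/\ a != 0, lam != 0 & orbit_eqs a b c lam th u].
Proof.
move=> nt nu t11 t21 au [P [Pu H]].
have [_ _ _ a0 l0] := @iso_row3 th u P nt nu t11 t21 au Pu H.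
exists (P o0 o0), (P o0 o1), (P o0 o2), (P o3 o3); split => //.
exact: iso_orbit_eqs.
Qed.

(* Consequences of the orbit equations, one for each shape of normal form:
   once the leading entries of t and u agree, a, b, c and lam are pinned
   down and the remaining parameters are related explicitly. *)
Definition orbit32_rel (a k : C) (t u : nat -> nat -> C) :=
  [/\ u 2 3 = t 2 3, u 1 3 = a * t 1 3 - k * u 2 3,
      u 2 2 = a * t 2 2 - k * (u 2 3 + 1) & u 3 1 = a * t 3 1 - k].

Section OrbitEquations.
Variables (a b c lam : C) (t u : nat -> nat -> C).
Hypotheses (E : orbit_eqs a b c lam t u) (a0 : a != 0).

Lemma orbit33 : t 3 3 = 1 -> u 3 3 = 1 -> t 1 3 = 0 -> u 1 3 = 0 -> t 3 2 = 0 -> u 3 2 = 0 ->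
  [/\ u 2 3 = a * t 2 3, u 3 1 = a^+2 * t 3 1, u 2 2 = a^+2 * t 2 2 & u 1 2 = a^+3 * t 1 2].
Proof.
move: E => [E12 E13 E22 E23 [E31 E32 E33]] t33 u33 t13 u13 t32 u32.
have hl : lam = a ^+ 6 by move: E33; rewrite t33 u33 !mulr1.
have hb : b = 0.
  apply: (expf_cancel (n := 4) a0); apply: (lin_comb1 (-1) E32).
  by rewrite t32 u32 u33; ring.
have hc : c = 0.
  apply: (expf_cancel (n := 3) a0); apply: (lin_comb1 (-1) E13).
  by rewrite t13 u13 u33 hb; ring.
rewrite hl hb hc in E12 E22 E23 E31.
split; apply: subr0_eq.
- by apply: (expf_cancel (n := 5) a0); apply: (lin_comb1 (-1) E23); rewrite u33; ring.
- by apply: (expf_cancel (n := 4) a0); apply: (lin_comb1 (-1) E31); rewrite u33 u32; ring.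
- by apply: (expf_cancel (n := 4) a0); apply: (lin_comb1 (-1) E22); rewrite u33 u32; ring.
- by apply: (expf_cancel (n := 3) a0); apply: (lin_comb1 (-1) E12); rewrite u33 u32 u13; ring.
Qed.

Lemma orbit32 : t 3 3 = 0 -> u 3 3 = 0 -> t 3 2 = 1 -> u 3 2 = 1 ->
  exists k, orbit32_rel a k t u.
Proof.
move: E => [E12 E13 E22 E23 [E31 E32 E33]] t33 u33 t32 u32.
have hl : lam = a ^+ 5 by move: E32; rewrite t32 u32 u33 !mulr1 mulr0 addr0.
rewrite hl in E13 E22 E23 E31.
exists (b / a); split; apply: subr0_eq.
- by apply: (expf_cancel (n := 5) a0); apply: (lin_comb1 (-1) E23); rewrite u33; ring.
- by apply: (expf_cancel (n := 4) a0); apply: (lin_comb1 (-1) E13); rewrite u33; field.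
- by apply: (expf_cancel (n := 4) a0); apply: (lin_comb1 (-1) E22); rewrite u33 u32; field.
- by apply: (expf_cancel (n := 4) a0); apply: (lin_comb1 (-1) E31); rewrite u33 u32; field.
Qed.

Lemma orbit23 : t 3 3 = 0 -> u 3 3 = 0 -> t 3 2 = 0 -> u 3 2 = 0 ->
  t 2 3 = 1 -> u 2 3 = 1 -> t 1 3 = 0 -> u 1 3 = 0 ->
  [/\ u 3 1 = a * t 3 1, u 2 2 = a * t 2 2 & u 1 2 = a^+2 * t 1 2].
Proof.
move: E => [E12 E13 E22 E23 [E31 E32 E33]] t33 u33 t32 u32 t23 u23 t13 u13.
have hl : lam = a ^+ 5 by move: E23; rewrite t23 u23 u33 !mulr1 mulr0 addr0.
have hb : b = 0.
  apply: (expf_cancel (n := 3) a0); apply: (lin_comb1 (-1) E13).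
  by rewrite t13 u13 u33 u23; ring.
rewrite hl hb in E12 E22 E31.
split; apply: subr0_eq.
- by apply: (expf_cancel (n := 4) a0); apply: (lin_comb1 (-1) E31); rewrite u33 u32; ring.
- by apply: (expf_cancel (n := 4) a0); apply: (lin_comb1 (-1) E22); rewrite u33 u32; ring.
- by apply: (expf_cancel (n := 3) a0); apply: (lin_comb1 (-1) E12); rewrite u33 u32 u13; ring.
Qed.

Lemma orbit_rest : t 3 3 = 0 -> u 3 3 = 0 -> t 3 2 = 0 -> u 3 2 = 0 -> t 2 3 = 0 -> u 2 3 = 0 ->
  t 3 1 + 2 * t 1 3 = 1 -> u 3 1 + 2 * u 1 3 = 1 ->
  [/\ u 1 3 = t 1 3, u 2 2 = t 2 2, u 3 1 = t 3 1 &
      a ^+ 4 * t 1 2 = a ^+ 3 * u 1 2 + a ^+ 2 * b * (u 1 3 + u 2 2)].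
Proof.
move: E => [E12 E13 E22 E23 [E31 E32 E33]] t33 u33 t32 u32 t23 u23 tt uu.
have hl : lam = a ^+ 4.
  transitivity (lam * (t 3 1 + 2 * t 1 3)); first by rewrite tt mulr1.
  transitivity (lam * t 3 1 + 2 * (lam * t 1 3)); first ring.
  rewrite E31 E13 u33 u32 u23.
  transitivity (a ^+ 4 * (u 3 1 + 2 * u 1 3)); first ring.
  by rewrite uu mulr1.
rewrite hl in E12 E13 E22 E31.
split.
- apply: subr0_eq; apply: (expf_cancel (n := 4) a0).
  by apply: (lin_comb1 (-1) E13); rewrite u33 u23; ring.
- apply: subr0_eq; apply: (expf_cancel (n := 4) a0).
  by apply: (lin_comb1 (-1) E22); rewrite u33 u23 u32; ring.
- apply: subr0_eq; apply: (expf_cancel (n := 4) a0).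
  by apply: (lin_comb1 (-1) E31); rewrite u33 u32; ring.
- by apply: (lin_comb1 1 E12); rewrite u33 u23 u32; ring.
Qed.

End OrbitEquations.

Arguments orbit33 {a b c lam t u}.
Arguments orbit32 {a b c lam t u}.
Arguments orbit23 {a b c lam t u}.
Arguments orbit_rest {a b c lam t u}.

Definition lead_entry (t : nat -> nat -> C) : nat :=
  if t 3 3 != 0 then 0 else if t 3 2 != 0 then 1 else if t 2 3 != 0 then 2 else 3.

Lemma lead_entry_orbit a b c lam t u : orbit_eqs a b c lam t u -> a != 0 -> lam != 0 ->
  lead_entry t = lead_entry u.
Proof.
move=> [E12 E13 E22 E23 [E31 E32 E33]] a0 l0; rewrite /lead_entry.
have ha n : a ^+ n != 0 by rewrite expf_neq0.
have same_support (x y : C) n : lam * x = a ^+ n * y -> (x != 0) = (y != 0).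
  move=> Exy; apply/idP/idP => h.
  - by have := mulf_neq0 l0 h; rewrite Exy mulf_eq0 negb_or => /andP [].
  - by have := mulf_neq0 (ha n) h; rewrite -Exy mulf_eq0 negb_or => /andP [].
rewrite (same_support _ _ _ E33); case: ifP => // /negbFE/eqP u33.
rewrite u33 !mulr0 !addr0 in E32 E23.
rewrite (same_support _ _ _ E32); case: ifP => // _.
by rewrite (same_support _ _ _ E23).
Qed.

Definition Ngroup (l : Nlab) : nat :=
  match l with
  | N28 _ _ _ | N29 _ _ | N31 _ | N33 | N41 => 0
  | N35 _ | N36 _ _ | N37 _ | N38 | N40 _ => 1
  | N27 _ _ | N30 _ | N32 | N39 => 2
  | N26 _ | N34 _ _ => 3
  end.

Lemma lead_entry_N l : lead_entry (Ncoef l) = Ngroup l.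
Proof. by case: l => *; rewrite /lead_entry /= ?oner_eq0 ?eqxx. Qed.

Definition N_iso_rel (l l' : Nlab) : Prop :=
  l = l' \/ (exists a b : C, l = N29 a b /\ l' = N29 (- a) b)
        \/ (exists a : C, l = N31 a /\ l' = N31 (- a)).

Definition N_orbit (l l' : Nlab) : Prop :=
  exists a b c lam, [/\ a != 0, lam != 0 & orbit_eqs a b c lam (Ncoef l) (Ncoef l')].

Lemma Ngroup_orbit {l l' : Nlab} : N_orbit l l' -> Ngroup l = Ngroup l'.
Proof.
case=> [a [b [c [lam [a0 l0 E]]]]]; rewrite -!lead_entry_N.
exact: lead_entry_orbit E a0 l0.
Qed.

Lemma C_one_neq0 : (1 : C) <> 0.
Proof. exact/eqP/oner_neq0. Qed.

(* closes the goals where some hypothesis equates a nonzero monomial in a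
   with zero (or 1 with 0) *)
Local Ltac absurd_monomial a0 := exfalso; match goal with H : _ = _ |- _ =>
  have := congr1 (fun z : C => z == 0) H;
  rewrite ?mulr0 ?mul0r ?mulr1 ?mul1r ?mulf_eq0 ?expf_eq0 ?oner_eq0 ?eqxx ?(negbTE a0)
          ?andbF ?orbF /=;
  by [] end.

Lemma N_orbit33 l l' : Ngroup l = 0 -> Ngroup l' = 0 -> N_orbit l l' -> N_iso_rel l l'.
Proof.
move=> gl gl' [a [b [c [lam [a0 l0 E]]]]].
have lead m : Ngroup m = 0 -> [/\ Ncoef m 3 3 = 1, Ncoef m 1 3 = 0 & Ncoef m 3 2 = 0] by case: m.
have [t1 t2 t3] := lead l gl; have [u1 u2 u3] := lead l' gl'.
have [h23 h31 h22 h12] := orbit33 E a0 t1 u1 t2 u2 t3 u3.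
clear E t1 t2 t3 u1 u2 u3 lead.
case: l gl h23 h31 h22 h12 => // [x y z|x y|x||] _;
  case: l' gl' => // [x' y' z'|x' y'|x'||] _ /= h23 h31 h22 h12.
all: try (absurd_monomial a0).
- have ha : a = 1 by move: h23; rewrite mulr1 => ->.
  by left; rewrite h31 h22 h12 ha !expr1n !mul1r.
- have : a ^+ 2 = 1 by move: h31; rewrite mulr1 => ->.
  move/eqP; rewrite sqrf_eq1 => /orP [] /eqP ha; rewrite ha in h22 h12.
    by left; rewrite h22 h12 !expr1n !mul1r.
  right; left; exists x, y; split => //.
  by rewrite h22 h12 sqrrN expr1n mul1r -signr_odd /= expr1 mulN1r.
- have : a ^+ 2 = 1 by move: h22; rewrite mulr1 => ->.
  move/eqP; rewrite sqrf_eq1 => /orP [] /eqP ha; rewrite ha in h12.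
    by left; rewrite h12 !expr1n !mul1r.
  right; right; exists x; split => //.
  by rewrite h12 -signr_odd /= expr1 mulN1r.
- by left.
- by left.
Qed.

Lemma N_orbit23 l l' : Ngroup l = 2 -> Ngroup l' = 2 -> N_orbit l l' -> N_iso_rel l l'.
Proof.
move=> gl gl' [a [b [c [lam [a0 l0 E]]]]].
have lead m : Ngroup m = 2 ->
    [/\ Ncoef m 3 3 = 0, Ncoef m 3 2 = 0, Ncoef m 2 3 = 1 & Ncoef m 1 3 = 0] by case: m.
have [t1 t2 t3 t4] := lead l gl; have [u1 u2 u3 u4] := lead l' gl'.
have [h31 h22 h12] := orbit23 E a0 t1 u1 t2 u2 t3 u3 t4 u4.
clear E t1 t2 t3 t4 u1 u2 u3 u4 lead.
case: l gl h31 h22 h12 => // [x y|x||] _; case: l' gl' => // [x' y'|x'||] _ /= h31 h22 h12.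
all: try (absurd_monomial a0).
- have ha : a = 1 by move: h31; rewrite mulr1 => ->.
  by left; rewrite h22 h12 ha !expr1n !mul1r.
- have ha : a = 1 by move: h22; rewrite mulr1 => ->.
  by left; rewrite h12 ha !expr1n !mul1r.
- by left.
- by left.
Qed.

Lemma N_orbit_rest l l' : Ngroup l = 3 -> Ngroup l' = 3 -> N_orbit l l' -> N_iso_rel l l'.
Proof.
move=> gl gl' [a [b [c [lam [a0 l0 E]]]]].
have lead m : Ngroup m = 3 -> [/\ Ncoef m 3 3 = 0, Ncoef m 3 2 = 0, Ncoef m 2 3 = 0
   & Ncoef m 3 1 + 2 * Ncoef m 1 3 = 1].
  by case: m => // *; cbn [Ncoef]; split => //; ring.
have [t1 t2 t3 t4] := lead l gl; have [u1 u2 u3 u4] := lead l' gl'.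
have [h13 h22 h31 h12] := orbit_rest E a0 t1 u1 t2 u2 t3 u3 t4 u4.
clear E t1 t2 t3 t4 u1 u2 u3 u4 lead.
case: l gl h13 h22 h31 h12 => // [x|x y] _; case: l' gl' => // [x'|x' y'] _ /= h13 h22 h31 h12.
- by left; rewrite h22.
- exfalso; have : a ^+ 4 * 1 = 0 by apply: (lin_comb1 1 h12); rewrite h13 h22; ring.
  by move/(expf_cancel a0)/C_one_neq0.
- exfalso; have : a ^+ 3 * 1 = 0 by apply: (lin_comb1 (-1) h12); rewrite h22; ring.
  by move/(expf_cancel a0)/C_one_neq0.
- by left; rewrite h13 h22.
Qed.

Section Orbit32Labels.
Variables (a k : C) (l' : Nlab).
Hypotheses (a0 : a != 0) (al' : Nadm l') (gl' : Ngroup l' = 1).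

Lemma orbit32_N35 x : orbit32_rel a k (Ncoef (N35 x)) (Ncoef l') -> N_iso_rel (N35 x) l'.
Proof.
case: l' al' gl' => // [x'|x' y'|x'||x'] al _; case => /= h23 h13 h22 h31;
  rewrite /Nadm in al.
- have hk : k = 0 by apply: (lin_comb2 1 2 h31 h13); ring.
  have ha : a = 1 by rewrite hk in h22; apply: (lin_comb1 (-1) h22); ring.
  by left; rewrite h13 hk ha; congr N35; ring.
- by rewrite h23 eqxx in al.
- by rewrite h23 eqxx in al.
- have hk : k = 0 by apply: (lin_comb2 1 2 h31 h13); ring.
  have ha : a = 0 by rewrite hk in h22; apply: (lin_comb1 (-1) h22); ring.
  by move: a0; rewrite ha eqxx.
- rewrite h23 in h13 h22.
  have ha : a = 0 by apply: (lin_comb3 2 (-1) 1 h13 h22 h31); ring.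
  by move: a0; rewrite ha eqxx.
Qed.

Lemma orbit32_N36 x y : Nadm (N36 x y) ->
  orbit32_rel a k (Ncoef (N36 x y)) (Ncoef l') -> N_iso_rel (N36 x y) l'.
Proof.
rewrite /Nadm => y0; case: l' al' gl' => // [x'|x' y'|x'||x'] al _; case => /= h23 h13 h22 h31;
  rewrite /Nadm in al.
- by rewrite -h23 eqxx in y0.
- have hk : k = 0 by apply: (mulf_cancel al); apply: (lin_comb1 1 h13); ring.
  have ha : a = 1 by rewrite hk in h31; apply: (lin_comb1 (-1) h31); ring.
  by left; rewrite h23 h22 hk ha; congr N36; ring.
- have hk : k = 0 by apply: (mulf_cancel al); apply: (lin_comb1 1 h13); ring.
  have ha : a = 0 by rewrite hk in h31; apply: (lin_comb1 (-1) h31); ring.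
  by move: a0; rewrite ha eqxx.
- by rewrite -h23 eqxx in y0.
- have x0 : x' != 0 by rewrite h23.
  have hk : k = 0 by apply: (mulf_cancel x0); apply: (lin_comb1 1 h13); ring.
  have ha : a = 0 by rewrite hk in h31; apply: (lin_comb1 (-1) h31); ring.
  by move: a0; rewrite ha eqxx.
Qed.

Lemma orbit32_N37 x : Nadm (N37 x) ->
  orbit32_rel a k (Ncoef (N37 x)) (Ncoef l') -> N_iso_rel (N37 x) l'.
Proof.
rewrite /Nadm => x0; case: l' al' gl' => // [x'|x' y'|x'||x'] al _; case => /= h23 h13 h22 h31;
  rewrite /Nadm in al.
- by rewrite -h23 eqxx in x0.
- have hk : k = 0 by apply: (mulf_cancel al); apply: (lin_comb1 1 h13); ring.
  by exfalso; apply: C_one_neq0; rewrite hk in h31; apply: (lin_comb1 1 h31); ring.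
- by left; rewrite h23.
- by rewrite -h23 eqxx in x0.
- have x0' : x' != 0 by rewrite h23.
  have hk : k = 0 by apply: (mulf_cancel x0'); apply: (lin_comb1 1 h13); ring.
  have ha : a = 0 by rewrite hk in h22; apply: (lin_comb1 (-1) h22); ring.
  by move: a0; rewrite ha eqxx.
Qed.

Lemma orbit32_N38 : orbit32_rel a k (Ncoef N38) (Ncoef l') -> N_iso_rel N38 l'.
Proof.
case: l' al' gl' => // [x'|x' y'|x'||x'] al _; case => /= h23 h13 h22 h31;
  rewrite /Nadm in al.
- by exfalso; apply: C_one_neq0; apply: (lin_comb3 (-2) 1 (-1) h13 h22 h31); ring.
- by rewrite h23 eqxx in al.
- by rewrite h23 eqxx in al.
- by left.
- rewrite h23 in h13.
  have ha : a = 0 by apply: (lin_comb1 (-1) h13); ring.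
  by move: a0; rewrite ha eqxx.
Qed.

Lemma orbit32_N40 x : orbit32_rel a k (Ncoef (N40 x)) (Ncoef l') -> N_iso_rel (N40 x) l'.
Proof.
case: l' al' gl' => // [x'|x' y'|x'||x'] al _; case => /= h23 h13 h22 h31;
  rewrite /Nadm in al.
- by exfalso; apply: C_one_neq0; apply: (lin_comb3 (-2) 1 (-1) h13 h22 h31); ring.
- have hk : k = 0 by apply: (mulf_cancel al); apply: (lin_comb1 1 h13); ring.
  by exfalso; apply: C_one_neq0; rewrite hk in h31; apply: (lin_comb1 1 h31); ring.
- have hk : k = 0 by apply: (mulf_cancel al); apply: (lin_comb1 1 h13); ring.
  by exfalso; apply: C_one_neq0; rewrite hk in h22; apply: (lin_comb1 1 h22); ring.
- by exfalso; apply: C_one_neq0; apply: (lin_comb1 1 h13); ring.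
- by left; rewrite h23.
Qed.

End Orbit32Labels.

Lemma N_orbit32 l l' : Nadm l -> Nadm l' -> Ngroup l = 1 -> Ngroup l' = 1 ->
  N_orbit l l' -> N_iso_rel l l'.
Proof.
move=> al al' gl gl' [a [b [c [lam [a0 l0 E]]]]].
have lead m : Ngroup m = 1 -> Ncoef m 3 3 = 0 /\ Ncoef m 3 2 = 1 by case: m.
have [t1 t2] := lead l gl; have [u1 u2] := lead l' gl'.
have [k hk] := orbit32 E a0 t1 u1 t2 u2.
case: l al gl {E t1 t2} hk => // [x|x y|x||x] al _ hk.
- exact: orbit32_N35 hk.
- exact: orbit32_N36 al hk.
- exact: orbit32_N37 al hk.
- exact: orbit32_N38 hk.
- exact: orbit32_N40 hk.
Qed.


Lemma Ncoef_e3_not_ann l : e3_not_ann (Ncoef l).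
Proof.
rewrite /e3_not_ann; case: l => *; cbn [Ncoef]; case=> h31 h32 h33 h13 h23; apply: C_one_neq0 => //.
all: by apply: (lin_comb2 1 2 h31 h13); ring.
Qed.

Lemma N_iso_sound l l' : Nadm l -> Nadm l' -> alg_iso (Nalg l) (Nalg l') -> N_iso_rel l l'.
Proof.
move=> al al'; rewrite !Nalg_Ext => /Ext_iso_orbit orb.
have {orb}orb : N_orbit l l'.
  apply: orb; [exact: Ncoef_e4free | exact: Ncoef_e4free | by case: l {al} | by case: l {al}
  | exact: Ncoef_e3_not_ann].
have := Ngroup_orbit orb; case gl : (Ngroup l) => [|[|[|[|n]]]] gl'.
- exact: N_orbit33.
- exact: N_orbit32.
- exact: N_orbit23.
- exact: N_orbit_rest.
- by case: l gl {al orb}.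
Qed.

(* e1 |-> - e1 exchanges N29(a, b) with N29(-a, b) and N31(a) with N31(-a) *)
Lemma N_iso_complete l l' : N_iso_rel l l' -> alg_iso (Nalg l) (Nalg l').
Proof.
have flip th th' : act (-1) 0 0 1 th' = th -> e4free th' ->
    alg_iso (Ext th) (Ext th') by move=> <- nt; apply: Ext_act_iso; rewrite // ?oppr_eq0 ?oner_eq0.
case=> [-> | [[x [y [-> ->]]] | [x [-> ->]]]]; first exact: alg_iso_refl.
all: rewrite !Nalg_Ext; apply: flip; last exact: Ncoef_e4free.
all: by apply: act_eq_Ncoef; cbn [act Ncoef]; field.
Qed.

Theorem mainTheorem3 :
  (forall T : sconst 4,
     ann_dim1 T -> quot_ann_iso T CD3_03 -> ~ is_CD T ->
     exists l : Nlab, Nadm l /\ alg_iso T (Nalg l))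
  /\
  (forall l l' : Nlab, Nadm l -> Nadm l' ->
     (alg_iso (Nalg l) (Nalg l') <->
        l = l'
        \/ (exists a b : C, l = N29 a b /\ l' = N29 (- a) b)
        \/ (exists a : C, l = N31 a /\ l' = N31 (- a)))).
Proof.
split.
- move=> T ann quot ncd.
  have [th [nt isoT]] := reduce_to_Ext T ann quot.
  have [|l [al isoN]] := classify th nt.
    by move=> [e32 [e33 [e23 e31]]]; apply: ncd; apply: is_CD_iso isoT _; exact: Ext_is_CD.
  by exists l; split => //; exact: alg_iso_trans isoT isoN.
- move=> l l' al al'; split; first exact: N_iso_sound.
  exact: N_iso_complete.
Qed.
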